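(* Let $A,G$ be selfadjoint operators in $\mathcal H$ and let $p\neq0$ be a polynomial with real coefficients of degree $d$. Then: (a) if $(A,G)$ is definitizable with definitizing polynomial $p$, then $(G,A)$ is definitizable with definitizing polynomial $\lambda\mapsto\lambda p(\lambda)$; (b) if $G$ is boundedly invertible, then $(A,G)$ is definitizable with definitizing polynomial $p$ if and only if $\rho(AG)\neq\emptyset$, $\rho(GA)\neq\emptyset$ and $(p(GA)x,G^{-1}x)\ge0$ for all $x\in\operatorname{dom}(GA)^{\max\{1,d\}}$.
   Context: $(\mathcal H,(\cdot,\cdot))$ complex Hilbert space; $A,G$ possibly unbounded selfadjoint; $AG,GA$ operator products with natural domains. $\rho(S)$: set of $\lambda$ with $S-\lambda$ injective, surjective, with bounded everywhere defined inverse; boundedly invertible means $0\in\rho(S)$. Definition: the ordered pair $(A,G)$ is definitizable if $\rho(AG)\neq\emptyset$, $\rho(GA)\neq\emptyset$ and there is a polynomial $p\neq0$ with real coefficients, of degree $d$, such that $(p(AG)x,Gx)\ge0$ for all $x\in\operatorname{dom}(AG)^{\max\{1,d\}}$; $p$ is then called definitizing for $(A,G)$. *)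

From Stdlib Require Import Reals ClassicalEpsilon.
Open Scope R_scope.

Record C := mkC { Re : R; Im : R }.
Definition C0 : C := mkC 0 0.
Definition C1 : C := mkC 1 0.
Definition RtoC (r : R) : C := mkC r 0.
Definition Cadd (a b : C) : C := mkC (Re a + Re b) (Im a + Im b).
Definition Copp (a : C) : C := mkC (- Re a) (- Im a).
Definition Cmul (a b : C) : C :=
  mkC (Re a * Re b - Im a * Im b) (Re a * Im b + Im a * Re b).
Definition Cconj (a : C) : C := mkC (Re a) (- Im a).
Definition Cnonneg (c : C) : Prop := Im c = 0 /\ 0 <= Re c.

Record Hilbert := {
  hcar :> Type;
  hzero : hcar;
  hadd : hcar -> hcar -> hcar;
  hopp : hcar -> hcar;
  hscal : C -> hcar -> hcar;
  hinner : hcar -> hcar -> C;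
  hadd_assoc : forall x y z, hadd x (hadd y z) = hadd (hadd x y) z;
  hadd_comm : forall x y, hadd x y = hadd y x;
  hadd_zero : forall x, hadd x hzero = x;
  hadd_opp : forall x, hadd x (hopp x) = hzero;
  hscal_one : forall x, hscal C1 x = x;
  hscal_assoc : forall a b x, hscal a (hscal b x) = hscal (Cmul a b) x;
  hscal_addv : forall a x y, hscal a (hadd x y) = hadd (hscal a x) (hscal a y);
  hscal_adds : forall a b x, hscal (Cadd a b) x = hadd (hscal a x) (hscal b x);
  hinner_addl : forall x y z, hinner (hadd x y) z = Cadd (hinner x z) (hinner y z);
  hinner_scall : forall a x y, hinner (hscal a x) y = Cmul a (hinner x y);
  hinner_sym : forall x y, hinner y x = Cconj (hinner x y);
  hinner_pos : forall x, 0 <= Re (hinner x x);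
  hinner_def : forall x, hinner x x = C0 -> x = hzero;
  hcomplete : forall u : nat -> hcar,
    (forall eps, 0 < eps -> exists N, forall m n, (N <= m)%nat -> (N <= n)%nat ->
        sqrt (Re (hinner (hadd (u m) (hopp (u n))) (hadd (u m) (hopp (u n))))) < eps) ->
    exists l, forall eps, 0 < eps -> exists N, forall n, (N <= n)%nat ->
        sqrt (Re (hinner (hadd (u n) (hopp l)) (hadd (u n) (hopp l)))) < eps
}.

Arguments hzero {h}. Arguments hadd {h}. Arguments hopp {h}.
Arguments hscal {h}. Arguments hinner {h}.

Definition hnorm {H : Hilbert} (x : H) : R := sqrt (Re (hinner x x)).
Definition hsub {H : Hilbert} (x y : H) : H := hadd x (hopp y).

(** * (Partial, possibly unbounded) operators: a domain and an action;
      the action outside the domain is irrelevant. *)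
Record Op (H : Hilbert) := mkOp { dom : H -> Prop; ap : H -> H }.
Arguments mkOp {H}. Arguments dom {H}. Arguments ap {H}.

Definition linear_op {H : Hilbert} (T : Op H) : Prop :=
  dom T hzero /\
  (forall x y, dom T x -> dom T y -> dom T (hadd x y) /\
                ap T (hadd x y) = hadd (ap T x) (ap T y)) /\
  (forall a x, dom T x -> dom T (hscal a x) /\ ap T (hscal a x) = hscal a (ap T x)).

Definition dense {H : Hilbert} (D : H -> Prop) : Prop :=
  forall x eps, 0 < eps -> exists y, D y /\ hnorm (hsub x y) < eps.

(** Selfadjoint: densely defined linear operator with T equals its adjoint, i.e. T is
    symmetric (T ⊆ adjoint of T) and dom(adjoint of T) ⊆ dom T. *)
Definition selfadjoint {H : Hilbert} (T : Op H) : Prop :=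
  linear_op T /\ dense (dom T) /\
  (forall x y, dom T x -> dom T y -> hinner (ap T x) y = hinner x (ap T y)) /\
  (forall y z, (forall x, dom T x -> hinner (ap T x) y = hinner x z) -> dom T y).

Definition opmul {H : Hilbert} (S T : Op H) : Op H :=
  mkOp (fun x => dom T x /\ dom S (ap T x)) (fun x => ap S (ap T x)).

Definition opid (H : Hilbert) : Op H := mkOp (fun _ => True) (fun x => x).

Fixpoint oppow {H : Hilbert} (T : Op H) (n : nat) : Op H :=
  match n with
  | O => opid H
  | S k => opmul (oppow T k) T
  end.

Definition is_degree (p : nat -> R) (d : nat) : Prop :=
  p d <> 0 /\ forall k, (d < k)%nat -> p k = 0.

(** The polynomial λ ↦ λ p(λ). *)
Definition shiftX (p : nat -> R) : nat -> R :=
  fun k => match k with O => 0 | S j => p j end.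

Fixpoint hsum_upto {H : Hilbert} (f : nat -> H) (n : nat) : H :=
  match n with
  | O => f O
  | S k => hadd (hsum_upto f k) (f (S k))
  end.

Definition polyop {H : Hilbert} (T : Op H) (p : nat -> R) (d : nat) : Op H :=
  mkOp (dom (oppow T d))
       (fun x => hsum_upto (fun k => hscal (RtoC (p k)) (ap (oppow T k) x)) d).

(** Resolvent set: T - λ injective, surjective, with bounded (everywhere
    defined) inverse. *)
Definition in_rho {H : Hilbert} (T : Op H) (l : C) : Prop :=
  (forall x y, dom T x -> dom T y ->
     hsub (ap T x) (hscal l x) = hsub (ap T y) (hscal l y) -> x = y) /\
  (forall z, exists x, dom T x /\ hsub (ap T x) (hscal l x) = z) /\
  (exists c, forall x, dom T x -> hnorm x <= c * hnorm (hsub (ap T x) (hscal l x))).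

Definition rho_nonempty {H : Hilbert} (T : Op H) : Prop := exists l, in_rho T l.

Definition boundedly_invertible {H : Hilbert} (T : Op H) : Prop := in_rho T C0.

(** The inverse operator (meaningful when T is bijective). *)
Definition inv_op {H : Hilbert} (T : Op H) : Op H :=
  mkOp (fun _ => True)
       (fun x => epsilon (inhabits (@hzero H)) (fun y => dom T y /\ ap T y = x)).

Definition definitizable_with {H : Hilbert} (A G : Op H) (p : nat -> R) (d : nat)
  : Prop :=
  rho_nonempty (opmul A G) /\ rho_nonempty (opmul G A) /\
  forall x, dom (oppow (opmul A G) (Nat.max 1 d)) x ->
    Cnonneg (hinner (ap (polyop (opmul A G) p d) x) (ap G x)).

(** Write [T = AG] and [S = GA].  Everything rests on two facts:

    - Intertwining: [G (AG)^k = (GA)^k G] on natural domains, so for a real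
      polynomial [p] and [x] in the right domain
      [(p(GA) Gx, x) = (p(AG) x, Gx)] by symmetry of [G]
      ([polyop_intertwine]).
    - Resolvent cores: if [lambda] lies in the resolvent set of a linear [T]
      and [B] is selfadjoint with [dom T ⊆ dom B], then every
      [x ∈ dom T^n] ([n ≥ 1]) is approximated by [x_m ∈ dom T^n] with
      [T^n x_m ∈ dom B], such that [T^k x_m -> T^k x] ([k ≤ n]) and
      [B x_m -> B x] ([resolvent_core]).  The proof writes [x = R^n w] with
      [R = (T - lambda)^-1], approximates [w] inside the dense set [dom B],
      and needs [B R] to be bounded: this is the Hellinger–Toeplitz argument
      [symmetric_after_bounded], itself based on the uniform boundedness
      principle [uniform_boundedness] (a Baire nested-balls argument).

    Part (a) is intertwining applied to [Ax] (for [deg p = 0] a resolvent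
    core of [GA] supplies the missing domain condition); part (b) is
    intertwining with [x = G^-1 y] in one direction and a resolvent core of
    [AG] plus closedness of the nonnegative reals in the other. *)

From Pilot Require Import Defs.
From Stdlib Require Import Reals Lra Lia ClassicalEpsilon Classical.
Open Scope R_scope.
Local Notation C := Defs.C.
Local Notation C0 := Defs.C0.

Arguments hadd_assoc {h}. Arguments hadd_comm {h}. Arguments hadd_zero {h}.
Arguments hadd_opp {h}. Arguments hscal_one {h}. Arguments hscal_assoc {h}.
Arguments hscal_addv {h}. Arguments hscal_adds {h}. Arguments hinner_addl {h}.
Arguments hinner_scall {h}. Arguments hinner_sym {h}. Arguments hinner_pos {h}.
Arguments hinner_def {h}.

Lemma Ceq (a b : C) : Re a = Re b -> Im a = Im b -> a = b.
Proof. destruct a, b; simpl; intros; subst; reflexivity. Qed.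

Lemma hadd_cancel {H : Hilbert} (a b c : H) : hadd a b = hadd a c -> b = c.
Proof.
  intros E.
  assert (E2 : hadd (hopp a) (hadd a b) = hadd (hopp a) (hadd a c)) by now rewrite E.
  rewrite !hadd_assoc, (hadd_comm (hopp a) a), hadd_opp in E2.
  now rewrite !(hadd_comm hzero), !hadd_zero in E2.
Qed.

Lemma hzero_add {H : Hilbert} (a : H) : hadd hzero a = a.
Proof. rewrite hadd_comm; apply hadd_zero. Qed.

Lemma hscal_zero_s {H : Hilbert} (x : H) : hscal C0 x = hzero.
Proof.
  apply (hadd_cancel (hscal C0 x)). rewrite hadd_zero, <- hscal_adds.
  f_equal. apply Ceq; simpl; ring.
Qed.

Lemma hopp_scal {H : Hilbert} (x : H) : hopp x = hscal (RtoC (-1)) x.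
Proof.
  apply (hadd_cancel x). rewrite hadd_opp, <- (hscal_zero_s x).
  rewrite <- (hscal_one x) at 2. rewrite <- hscal_adds.
  f_equal. apply Ceq; simpl; ring.
Qed.

Lemma hscal_comm {H : Hilbert} (a b : C) (x : H) : hscal a (hscal b x) = hscal b (hscal a x).
Proof. rewrite !hscal_assoc. f_equal. apply Ceq; simpl; ring. Qed.

Lemma hopp_hadd {H : Hilbert} (x y : H) : hopp (hadd x y) = hadd (hopp x) (hopp y).
Proof. now rewrite !hopp_scal, hscal_addv. Qed.

Lemma hopp_hopp {H : Hilbert} (x : H) : hopp (hopp x) = x.
Proof.
  rewrite !hopp_scal, hscal_assoc. rewrite <- (hscal_one x) at 2.
  f_equal. apply Ceq; simpl; ring.
Qed.

Lemma hadd_sub {H : Hilbert} (a b : H) : hadd (hsub a b) b = a.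
Proof.
  unfold hsub. now rewrite <- hadd_assoc, (hadd_comm (hopp b)), hadd_opp, hadd_zero.
Qed.

Lemma hsub_eq {H : Hilbert} (u v z : H) : hsub u v = z -> u = hadd z v.
Proof. intros <-. now rewrite hadd_sub. Qed.

Lemma hsub_self {H : Hilbert} (a : H) : hsub a a = hzero.
Proof. apply hadd_opp. Qed.

Lemma hsub_zero {H : Hilbert} (a : H) : hsub a hzero = a.
Proof. pose proof (hadd_sub a hzero) as E. now rewrite hadd_zero in E. Qed.

Lemma hsub_sym {H : Hilbert} (x y : H) : hsub x y = hopp (hsub y x).
Proof. unfold hsub. now rewrite hopp_hadd, hopp_hopp, hadd_comm. Qed.

Lemma hsub_chain {H : Hilbert} (x y z : H) : hsub x z = hadd (hsub x y) (hsub y z).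
Proof.
  unfold hsub. rewrite <- hadd_assoc, (hadd_assoc (hopp y) y), (hadd_comm (hopp y) y).
  now rewrite hadd_opp, hzero_add.
Qed.

Lemma hsub_hadd {H : Hilbert} (a b c d : H) :
  hsub (hadd a b) (hadd c d) = hadd (hsub a c) (hsub b d).
Proof.
  unfold hsub. rewrite hopp_hadd, !hadd_assoc. f_equal.
  rewrite <- !hadd_assoc. f_equal. apply hadd_comm.
Qed.

Lemma hsub_scal {H : Hilbert} (a : C) (x y : H) : hsub (hscal a x) (hscal a y) = hscal a (hsub x y).
Proof.
  unfold hsub. rewrite hscal_addv, !hopp_scal, !hscal_assoc. do 2 f_equal.
  apply Ceq; simpl; ring.
Qed.

Lemma hinner_zero_l {H : Hilbert} (y : H) : hinner hzero y = C0.
Proof. rewrite <- (hscal_zero_s y), hinner_scall. apply Ceq; simpl; ring. Qed.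

Lemma hinner_zero_r {H : Hilbert} (y : H) : hinner y hzero = C0.
Proof. rewrite hinner_sym, hinner_zero_l. apply Ceq; simpl; ring. Qed.

Lemma hinner_addr {H : Hilbert} (x y z : H) :
  hinner x (hadd y z) = Cadd (hinner x y) (hinner x z).
Proof.
  rewrite hinner_sym, hinner_addl, (hinner_sym y x), (hinner_sym z x).
  apply Ceq; simpl; ring.
Qed.

Lemma hinner_scalr {H : Hilbert} (a : C) (x y : H) :
  hinner x (hscal a y) = Cmul (Cconj a) (hinner x y).
Proof. rewrite hinner_sym, hinner_scall, (hinner_sym y x). apply Ceq; simpl; ring. Qed.

Lemma Im_self {H : Hilbert} (x : H) : Im (hinner x x) = 0.
Proof.
  pose proof (hinner_sym x x) as E. destruct (hinner x x) as [a b]; simpl in *.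
  injection E; intros; lra.
Qed.

Definition rinner {H : Hilbert} (x y : H) : R := Re (hinner x y).

Lemma rinner_addl {H : Hilbert} (x y z : H) : rinner (hadd x y) z = rinner x z + rinner y z.
Proof. unfold rinner; now rewrite hinner_addl. Qed.
Lemma rinner_addr {H : Hilbert} (x y z : H) : rinner x (hadd y z) = rinner x y + rinner x z.
Proof. unfold rinner; now rewrite hinner_addr. Qed.
Lemma rinner_sym {H : Hilbert} (x y : H) : rinner x y = rinner y x.
Proof. unfold rinner; now rewrite hinner_sym. Qed.
Lemma rinner_scall {H : Hilbert} (t : R) (x y : H) :
  rinner (hscal (RtoC t) x) y = t * rinner x y.
Proof. unfold rinner; rewrite hinner_scall; simpl; ring. Qed.
Lemma rinner_scalr {H : Hilbert} (t : R) (x y : H) :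
  rinner x (hscal (RtoC t) y) = t * rinner x y.
Proof. now rewrite rinner_sym, rinner_scall, rinner_sym. Qed.
Lemma rinner_subl {H : Hilbert} (x y z : H) : rinner (hsub x y) z = rinner x z - rinner y z.
Proof. unfold hsub; rewrite rinner_addl, hopp_scal, rinner_scall; ring. Qed.
Lemma rinner_subr {H : Hilbert} (x y z : H) : rinner z (hsub x y) = rinner z x - rinner z y.
Proof. now rewrite rinner_sym, rinner_subl, !(rinner_sym z). Qed.
Lemma rinner_pos {H : Hilbert} (x : H) : 0 <= rinner x x.
Proof. apply hinner_pos. Qed.
Lemma rinner_def {H : Hilbert} (x : H) : rinner x x = 0 -> x = hzero.
Proof. intros E. apply hinner_def, Ceq; [exact E | apply Im_self]. Qed.
Lemma rinner_zero_r {H : Hilbert} (x : H) : rinner x hzero = 0.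
Proof. unfold rinner; now rewrite hinner_zero_r. Qed.

Definition Ci : C := mkC 0 1.
Lemma Im_rinner {H : Hilbert} (x y : H) : Im (hinner x y) = rinner x (hscal Ci y).
Proof. unfold rinner. rewrite hinner_scalr. simpl. ring. Qed.

Lemma hnorm_sq {H : Hilbert} (x : H) : hnorm x * hnorm x = rinner x x.
Proof. unfold hnorm. apply sqrt_sqrt, rinner_pos. Qed.
Lemma hnorm_pos {H : Hilbert} (x : H) : 0 <= hnorm x.
Proof. apply sqrt_pos. Qed.
Lemma hnorm_zero {H : Hilbert} : hnorm (@hzero H) = 0.
Proof. unfold hnorm. rewrite hinner_zero_l. apply sqrt_0. Qed.
Lemma hnorm_eq0 {H : Hilbert} (x : H) : hnorm x = 0 -> x = hzero.
Proof. intros E. apply rinner_def. rewrite <- hnorm_sq, E. ring. Qed.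

Lemma cauchy_schwarz {H : Hilbert} (x y : H) : Rabs (rinner x y) <= hnorm x * hnorm y.
Proof.
  set (r := rinner x y). set (a := rinner x x). set (b := rinner y y).
  assert (Q : forall t, 0 <= a + 2 * t * r + t * t * b).
  { intros t. pose proof (rinner_pos (hadd x (hscal (RtoC t) y))) as P.
    rewrite rinner_addl, !rinner_addr, !rinner_scall, !rinner_scalr, (rinner_sym y x) in P.
    unfold r, a, b. nra. }
  assert (Hr : r * r <= a * b).
  { destruct (Req_dec b 0) as [Hb|Hb].
    - assert (y = hzero) by now apply rinner_def. subst y.
      unfold r; rewrite rinner_zero_r. pose proof (rinner_pos x). unfold a. nra.
    - assert (0 < b) by (pose proof (rinner_pos y); unfold b in *; lra).
      specialize (Q (- r / b)).
      replace (a + 2 * (- r / b) * r + (- r / b) * (- r / b) * b) with ((a * b - r * r) / b)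
        in Q by (field; lra).
      apply (Rmult_le_compat_r b) in Q; [|lra].
      replace ((a * b - r * r) / b * b) with (a * b - r * r) in Q by (field; lra). lra. }
  pose proof (hnorm_pos x). pose proof (hnorm_pos y).
  pose proof (hnorm_sq x) as Ex. pose proof (hnorm_sq y) as Ey. fold a b in Ex, Ey.
  assert (Rabs r * Rabs r <= (hnorm x * hnorm y) * (hnorm x * hnorm y)).
  { rewrite <- Rabs_mult, Rabs_pos_eq by nra. nra. }
  apply Rsqr_incr_0_var; unfold Rsqr; [lra | nra].
Qed.

Lemma hnorm_triangle {H : Hilbert} (x y : H) : hnorm (hadd x y) <= hnorm x + hnorm y.
Proof.
  pose proof (cauchy_schwarz x y). pose proof (Rle_abs (rinner x y)).
  pose proof (hnorm_pos x). pose proof (hnorm_pos y). pose proof (hnorm_pos (hadd x y)).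
  assert (hnorm (hadd x y) * hnorm (hadd x y) =
          hnorm x * hnorm x + 2 * rinner x y + hnorm y * hnorm y).
  { rewrite !hnorm_sq, rinner_addl, !rinner_addr, (rinner_sym y x). ring. }
  apply Rsqr_incr_0_var; unfold Rsqr; nra.
Qed.

Lemma hsub_triangle {H : Hilbert} (x y z : H) :
  hnorm (hsub x z) <= hnorm (hsub x y) + hnorm (hsub y z).
Proof. rewrite (hsub_chain x y z). apply hnorm_triangle. Qed.

Definition Cabs (a : C) : R := sqrt (Re a * Re a + Im a * Im a).

Lemma Cabs_pos (a : C) : 0 <= Cabs a.
Proof. apply sqrt_pos. Qed.

Lemma Cabs_RtoC (t : R) : Cabs (RtoC t) = Rabs t.
Proof. unfold Cabs; simpl. replace (t * t + 0 * 0) with (t * t) by ring. apply sqrt_Rsqr_abs. Qed.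

Lemma hnorm_scal {H : Hilbert} (a : C) (x : H) : hnorm (hscal a x) = Cabs a * hnorm x.
Proof.
  unfold hnorm, Cabs. rewrite <- sqrt_mult; [| nra | apply rinner_pos].
  f_equal. rewrite hinner_scall, hinner_scalr.
  pose proof (Im_self x). destruct (hinner x x) as [u v]; simpl in *. subst v. ring.
Qed.

Lemma hnorm_sub_sym {H : Hilbert} (x y : H) : hnorm (hsub x y) = hnorm (hsub y x).
Proof.
  rewrite hsub_sym, hopp_scal, hnorm_scal, Cabs_RtoC, Rabs_left by lra. ring.
Qed.

Definition BL {H : Hilbert} (f : H -> H) : Prop :=
  (forall x y, f (hadd x y) = hadd (f x) (f y)) /\
  (forall a x, f (hscal a x) = hscal a (f x)) /\
  exists c, 0 <= c /\ forall x, hnorm (f x) <= c * hnorm x.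

Lemma BL_sub {H : Hilbert} (f : H -> H) : BL f -> forall x y, f (hsub x y) = hsub (f x) (f y).
Proof. intros [Ha [Hs _]] x y. unfold hsub. now rewrite Ha, !hopp_scal, Hs. Qed.

Lemma BL_id {H : Hilbert} : BL (fun x : H => x).
Proof. repeat split; auto. exists 1. split; intros; lra. Qed.

Lemma BL_comp {H : Hilbert} (f g : H -> H) : BL f -> BL g -> BL (fun x => f (g x)).
Proof.
  intros [Fa [Fs [cf [Pf Cf]]]] [Ga [Gs [cg [Pg Cg]]]]. split; [|split].
  - intros x y. now rewrite Ga, Fa.
  - intros a x. now rewrite Gs, Fs.
  - exists (cf * cg). split; [nra|]. intros x. eapply Rle_trans; [apply Cf|].
    rewrite Rmult_assoc. apply Rmult_le_compat_l; auto.
Qed.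

Lemma BL_add {H : Hilbert} (f g : H -> H) : BL f -> BL g -> BL (fun x => hadd (f x) (g x)).
Proof.
  intros [Fa [Fs [cf [Pf Cf]]]] [Ga [Gs [cg [Pg Cg]]]]. split; [|split].
  - intros x y. rewrite Fa, Ga, !hadd_assoc. f_equal.
    rewrite <- !hadd_assoc. f_equal. apply hadd_comm.
  - intros a x. now rewrite Fs, Gs, hscal_addv.
  - exists (cf + cg). split; [lra|]. intros x.
    eapply Rle_trans; [apply hnorm_triangle|]. specialize (Cf x). specialize (Cg x). lra.
Qed.

Lemma BL_scal {H : Hilbert} (a : C) (f : H -> H) : BL f -> BL (fun x => hscal a (f x)).
Proof.
  intros [Fa [Fs [cf [Pf Cf]]]]. split; [|split].
  - intros x y. now rewrite Fa, hscal_addv.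
  - intros b x. now rewrite Fs, hscal_comm.
  - exists (Cabs a * cf). pose proof (Cabs_pos a). split; [nra|]. intros x.
    rewrite hnorm_scal, Rmult_assoc. apply Rmult_le_compat_l; auto.
Qed.

Lemma BL_ext {H : Hilbert} (f g : H -> H) : (forall x, f x = g x) -> BL f -> BL g.
Proof.
  intros E [Fa [Fs [c [Pc Cf]]]]. split; [|split].
  - intros x y. rewrite <- !E. apply Fa.
  - intros a x. rewrite <- !E. apply Fs.
  - exists c. split; auto. intros x. rewrite <- E. apply Cf.
Qed.

Definition hconv {H : Hilbert} (u : nat -> H) (l : H) : Prop :=
  forall eps, 0 < eps -> exists N, forall n, (N <= n)%nat -> hnorm (hsub (u n) l) < eps.
Definition rconv (a : nat -> R) (l : R) : Prop :=
  forall eps, 0 < eps -> exists N, forall n, (N <= n)%nat -> Rabs (a n - l) < eps.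

Lemma hconv_add {H : Hilbert} (u v : nat -> H) l m :
  hconv u l -> hconv v m -> hconv (fun n => hadd (u n) (v n)) (hadd l m).
Proof.
  intros Hu Hv e He. destruct (Hu (e/2)) as [N1 H1]; [lra|]. destruct (Hv (e/2)) as [N2 H2]; [lra|].
  exists (Nat.max N1 N2). intros n Hn. rewrite hsub_hadd.
  eapply Rle_lt_trans; [apply hnorm_triangle|].
  specialize (H1 n ltac:(lia)); specialize (H2 n ltac:(lia)); lra.
Qed.

Lemma hconv_BL {H : Hilbert} (f : H -> H) (u : nat -> H) l :
  BL f -> hconv u l -> hconv (fun n => f (u n)) (f l).
Proof.
  intros Hf Hu e He. destruct Hf as (Fa & Fs & c & Pc & Cf).
  destruct (Hu (e / (c + 1))) as [N HN]; [apply Rdiv_lt_0_compat; lra|].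
  exists N. intros n Hn. rewrite <- BL_sub by (repeat split; eauto).
  specialize (HN n Hn). specialize (Cf (hsub (u n) l)).
  apply Rmult_lt_compat_l with (r := c + 1) in HN; [|lra].
  replace ((c + 1) * (e / (c + 1))) with e in HN by (field; lra).
  pose proof (hnorm_pos (hsub (u n) l)). nra.
Qed.

Lemma hconv_scal {H : Hilbert} (a : C) (u : nat -> H) l :
  hconv u l -> hconv (fun n => hscal a (u n)) (hscal a l).
Proof. apply (hconv_BL (fun x => hscal a x)), BL_scal, BL_id. Qed.

Lemma hconv_bounded {H : Hilbert} (u : nat -> H) l :
  hconv u l -> exists N, forall n, (N <= n)%nat -> hnorm (u n) <= hnorm l + 1.
Proof.
  intros Hu. destruct (Hu 1 ltac:(lra)) as [N HN]. exists N. intros n Hn.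
  specialize (HN n Hn). pose proof (hnorm_triangle (hsub (u n) l) l) as T.
  rewrite hadd_sub in T. lra.
Qed.

Lemma rconv_inner {H : Hilbert} (u v : nat -> H) l m :
  hconv u l -> hconv v m -> rconv (fun n => rinner (u n) (v n)) (rinner l m).
Proof.
  intros Hu Hv e He.
  destruct (hconv_bounded v m Hv) as [N0 H0].
  set (K := hnorm m + hnorm l + 1).
  assert (HK : 0 < K) by (unfold K; pose proof (hnorm_pos m); pose proof (hnorm_pos l); lra).
  destruct (Hu (e / (4*K))) as [N1 H1]; [apply Rdiv_lt_0_compat; lra|].
  destruct (Hv (e / (4*K))) as [N2 H2]; [apply Rdiv_lt_0_compat; lra|].
  exists (Nat.max N0 (Nat.max N1 N2)). intros n Hn.
  specialize (H0 n ltac:(lia)); specialize (H1 n ltac:(lia)); specialize (H2 n ltac:(lia)).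
  replace (rinner (u n) (v n) - rinner l m) with
    (rinner (hsub (u n) l) (v n) + rinner l (hsub (v n) m))
    by (rewrite rinner_subl, rinner_subr; ring).
  eapply Rle_lt_trans; [apply Rabs_triang|].
  pose proof (cauchy_schwarz (hsub (u n) l) (v n)). pose proof (cauchy_schwarz l (hsub (v n) m)).
  pose proof (hnorm_pos (hsub (u n) l)). pose proof (hnorm_pos (hsub (v n) m)).
  pose proof (hnorm_pos (v n)). pose proof (hnorm_pos l). pose proof (hnorm_pos m).
  assert (hnorm (hsub (u n) l) * hnorm (v n) <= e / (4*K) * K)
    by (apply Rmult_le_compat; unfold K in *; lra).
  assert (hnorm l * hnorm (hsub (v n) m) <= K * (e / (4*K)))
    by (apply Rmult_le_compat; unfold K in *; lra).
  replace (e / (4*K) * K) with (e/4) in * by (field; lra).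
  replace (K * (e / (4*K))) with (e/4) in * by (field; lra).
  lra.
Qed.

Lemma rconv_nonneg (a : nat -> R) l : rconv a l -> (forall n, 0 <= a n) -> 0 <= l.
Proof.
  intros Ha Hp. apply Rnot_lt_le. intros Hl.
  destruct (Ha (- l) ltac:(lra)) as [N HN]. specialize (HN N (le_n _)). specialize (Hp N).
  apply Rabs_def2 in HN. lra.
Qed.

Lemma rconv_zero (a : nat -> R) l : rconv a l -> (forall n, a n = 0) -> l = 0.
Proof.
  intros Ha Hp. destruct (Req_dec l 0) as [|Hl]; auto.
  destruct (Ha (Rabs l) ltac:(apply Rabs_pos_lt; auto)) as [N HN]. specialize (HN N (le_n _)).
  rewrite Hp, Rminus_0_l, Rabs_Ropp in HN. lra.
Qed.

Lemma Cnonneg_lim {H : Hilbert} (u v : nat -> H) l m :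
  hconv u l -> hconv v m -> (forall n, Cnonneg (hinner (u n) (v n))) -> Cnonneg (hinner l m).
Proof.
  intros Hu Hv Hn. split.
  - rewrite Im_rinner. apply (rconv_zero (fun n => rinner (u n) (hscal Ci (v n)))).
    + apply rconv_inner, hconv_scal; auto.
    + intros n. rewrite <- Im_rinner. apply Hn.
  - apply (rconv_nonneg (fun n => rinner (u n) (v n))).
    + now apply rconv_inner.
    + intros n. apply Hn.
Qed.

Lemma dense_seq {H : Hilbert} (D : H -> Prop) : dense D -> forall w,
  exists u : nat -> H, (forall n, D (u n)) /\ hconv u w.
Proof.
  intros HD w.
  pose (u := fun n : nat => epsilon (inhabits (@hzero H))
               (fun v => D v /\ hnorm (hsub w v) < / (INR n + 1))).
  assert (Hu : forall n, D (u n) /\ hnorm (hsub w (u n)) < / (INR n + 1)).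
  { intros n. apply epsilon_spec, HD, Rinv_0_lt_compat. pose proof (pos_INR n); lra. }
  exists u. split; [intros n; apply Hu|].
  intros e He. destruct (INR_unbounded (/ e)) as [N HN]. exists N. intros n Hn.
  rewrite hnorm_sub_sym. eapply Rlt_trans; [apply Hu|].
  apply le_INR in Hn. pose proof (pos_INR N).
  assert (0 < / e) by (apply Rinv_0_lt_compat; lra).
  rewrite <- (Rinv_inv e). apply Rinv_lt_contravar; [nra | lra].
Qed.

Definition in_ball {H : Hilbert} (c : H) (r : R) (z : H) : Prop := hnorm (hsub z c) <= r.

Lemma in_ball_center {H : Hilbert} (c : H) (r : R) : 0 <= r -> in_ball c r c.
Proof. unfold in_ball. rewrite hsub_self, hnorm_zero. lra. Qed.

Lemma nested_balls_point {H : Hilbert} (c : nat -> H) (r : nat -> R) :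
  (forall n, 0 < r n) ->
  (forall n z, in_ball (c (S n)) (r (S n)) z -> in_ball (c n) (r n) z) ->
  (forall n, r (S n) <= / (INR n + 1)) ->
  exists l, forall n, in_ball (c n) (r n) l.
Proof.
  intros Hpos Hdec Hsmall.
  assert (Hnest : forall n k z, (k <= n)%nat -> in_ball (c n) (r n) z -> in_ball (c k) (r k) z).
  { induction n; intros k z Hk Hz.
    - now replace k with O by lia.
    - destruct (Nat.eq_dec k (S n)) as [->|E]; auto. apply (IHn k); [lia | auto]. }
  assert (Hc : forall n k, (k <= n)%nat -> in_ball (c k) (r k) (c n))
    by (intros n k Hk; apply (Hnest n); auto; apply in_ball_center; left; auto).
  assert (Hcauchy : forall eps, 0 < eps -> exists N, forall m n, (N <= m)%nat -> (N <= n)%nat ->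
            hnorm (hsub (c m) (c n)) < eps).
  { intros eps He. destruct (INR_unbounded (2 / eps)) as [N HN].
    exists (S N). intros m n Hm Hn.
    pose proof (Hc m (S N) Hm) as Bm. pose proof (Hc n (S N) Hn) as Bn. unfold in_ball in Bm, Bn.
    rewrite hnorm_sub_sym in Bn.
    pose proof (hsub_triangle (c m) (c (S N)) (c n)). pose proof (Hsmall N). pose proof (pos_INR N).
    assert (/ (INR N + 1) < eps / 2).
    { apply (Rmult_lt_reg_l (INR N + 1)); [lra|]. rewrite Rinv_r by lra.
      apply (Rmult_lt_reg_l (2 / eps)); [apply Rdiv_lt_0_compat; lra|].
      replace (2 / eps * ((INR N + 1) * (eps / 2))) with (INR N + 1) by (field; lra). lra. }
    lra. }
  destruct (hcomplete H c Hcauchy) as [l Hl]. exists l. intros k.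
  apply Rnot_lt_le. intros Hlt.
  destruct (Hl (hnorm (hsub l (c k)) - r k) ltac:(lra)) as [N HN].
  specialize (HN (Nat.max N k) ltac:(lia)).
  change (hnorm (hsub (c (Nat.max N k)) l) < hnorm (hsub l (c k)) - r k) in HN.
  pose proof (Hc (Nat.max N k) k ltac:(lia)) as B. unfold in_ball in B.
  pose proof (hsub_triangle l (c (Nat.max N k)) (c k)). rewrite hnorm_sub_sym in HN. lra.
Qed.

(** ** The uniform boundedness principle

    If no uniform bound existed, every
    ball would contain a smaller ball on which some [|psi i|] exceeds any
    prescribed level; the common point of a nested sequence of such balls
    contradicts pointwise boundedness. *)

Section UniformBoundedness.
Context {H : Hilbert} {I : Type} (psi : I -> H -> R).
Hypothesis psi_add : forall i x y, psi i (hadd x y) = psi i x + psi i y.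
Hypothesis psi_scal : forall i t x, psi i (hscal (RtoC t) x) = t * psi i x.
Hypothesis psi_bounded : forall i, exists L, 0 <= L /\ forall x, Rabs (psi i x) <= L * hnorm x.

Lemma psi_zero (i : I) : psi i hzero = 0.
Proof. pose proof (psi_add i hzero hzero) as E. rewrite hadd_zero in E. lra. Qed.

Lemma psi_sub (i : I) (x y : H) : psi i (hsub x y) = psi i x - psi i y.
Proof. pose proof (psi_add i (hsub x y) y) as E. rewrite hadd_sub in E. lra. Qed.

Section NoUniformBound.
Hypothesis no_bound : forall K, exists i x, K * hnorm x < Rabs (psi i x).

Lemma large_value_near (M : R) (c : H) (r : R) : 0 < r ->
  exists i c', in_ball c (r / 2) c' /\ M < Rabs (psi i c').
Proof.
  intros Hr. set (K := Rabs M + 1). pose proof (Rle_abs M).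
  destruct (no_bound (4 * K / r)) as [i [w Hw]]. exists i.
  assert (Hw0 : 0 < hnorm w).
  { destruct (Rle_lt_or_eq_dec 0 (hnorm w) (hnorm_pos w)) as [|E]; auto.
    symmetry in E. apply hnorm_eq0 in E. subst w.
    rewrite psi_zero, hnorm_zero, Rabs_R0 in Hw. lra. }
  set (s := r / (2 * hnorm w)). assert (Hs : 0 < s) by (apply Rdiv_lt_0_compat; lra).
  set (w' := hscal (RtoC s) w).
  assert (Nw' : hnorm w' = r / 2).
  { unfold w'. rewrite hnorm_scal, Cabs_RtoC, Rabs_pos_eq by lra. unfold s. field. lra. }
  assert (Pw' : 2 * K < Rabs (psi i w')).
  { unfold w'. rewrite psi_scal, Rabs_mult, (Rabs_pos_eq s) by lra.
    apply Rmult_lt_compat_l with (r := s) in Hw; auto.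
    replace (s * (4 * K / r * hnorm w)) with (2 * K) in Hw by (unfold s; field; lra). lra. }
  destruct (Rlt_or_le M (Rabs (psi i c))) as [Hlt|Hle].
  - exists c. split; auto. apply in_ball_center. lra.
  - exists (hadd c w'). split.
    + unfold in_ball, hsub.
      rewrite <- hadd_assoc, (hadd_comm w'), hadd_assoc, hadd_opp, hzero_add. lra.
    + rewrite psi_add. pose proof (Rabs_triang (psi i c + psi i w') (- psi i c)) as T.
      replace (psi i c + psi i w' + - psi i c) with (psi i w') in T by ring.
      rewrite Rabs_Ropp in T. unfold K in Pw'. lra.
Qed.

Lemma large_on_ball (i : I) (c : H) (M s : R) : 0 < s -> M + 1 < Rabs (psi i c) ->
  exists r, 0 < r /\ r <= s /\ forall z, in_ball c r z -> M < Rabs (psi i z).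
Proof.
  intros Hs Hc. destruct (psi_bounded i) as [L [HL0 HL]].
  exists (Rmin s (/ (L + 1))). split; [apply Rmin_pos; [lra | apply Rinv_0_lt_compat; lra]|].
  split; [apply Rmin_l|]. intros z Hz. unfold in_ball in Hz.
  assert (Hd : Rabs (psi i (hsub z c)) <= 1).
  { eapply Rle_trans; [apply HL|].
    assert (L * hnorm (hsub z c) <= L * / (L + 1))
      by (apply Rmult_le_compat_l; [lra | eapply Rle_trans; [apply Hz | apply Rmin_r]]).
    assert (L * / (L + 1) <= 1) by (apply (Rmult_le_reg_r (L + 1)); [lra|]; field_simplify; lra).
    lra. }
  rewrite psi_sub in Hd. pose proof (Rabs_triang (psi i z - psi i c) (psi i c)) as T.
  pose proof (Rabs_triang (psi i c - psi i z) (psi i z)) as T'.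
  replace (psi i c - psi i z + psi i z) with (psi i c) in T' by ring.
  rewrite Rabs_minus_sym in T'. lra.
Qed.

Definition shrink_step (k : nat) (c : H) (r : R) (b : H * R) : Prop :=
  0 < snd b /\ snd b <= / (INR k + 1) /\
  (forall z, in_ball (fst b) (snd b) z -> in_ball c r z) /\
  (forall z, in_ball (fst b) (snd b) z -> exists i, INR k < Rabs (psi i z)).

Lemma shrink_step_exists (k : nat) (c : H) (r : R) : 0 < r -> exists b, shrink_step k c r b.
Proof.
  intros Hr. pose proof (pos_INR k).
  destruct (large_value_near (INR k + 1) c r Hr) as [i [c' [Hc' Hi]]].
  destruct (large_on_ball i c' (INR k) (Rmin (r / 2) (/ (INR k + 1)))) as [r' [Hr'0 [Hr's Hball]]];
    [apply Rmin_pos; [lra | apply Rinv_0_lt_compat; lra] | lra |].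
  exists (c', r'). repeat split; simpl; auto.
  - eapply Rle_trans; [apply Hr's | apply Rmin_r].
  - intros z Hz. unfold in_ball in *. pose proof (hsub_triangle z c' c).
    assert (r' <= r / 2) by (eapply Rle_trans; [apply Hr's | apply Rmin_l]). lra.
  - intros z Hz. exists i. auto.
Qed.

End NoUniformBound.

Lemma uniform_boundedness :
  (forall x, exists M, forall i, Rabs (psi i x) <= M) ->
  exists K, forall i x, Rabs (psi i x) <= K * hnorm x.
Proof.
  intros Hpt. apply NNPP. intros NB0.
  assert (NB : forall K, exists i x, K * hnorm x < Rabs (psi i x)).
  { intros K. apply NNPP. intros NE. apply NB0. exists K. intros i x.
    apply Rnot_lt_le. intros Hlt. apply NE. eauto. }
  pose (f := fun k c r => epsilon (inhabits (@hzero H, 1)) (fun b => 0 < r -> shrink_step k c r b)).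
  assert (Hf : forall k c r, 0 < r -> shrink_step k c r (f k c r)).
  { intros k c r Hr. destruct (shrink_step_exists NB k c r Hr) as [b Hb].
    refine (epsilon_spec _ (fun b => 0 < r -> shrink_step k c r b) _ Hr). eauto. }
  pose (g := fix g (n : nat) : H * R :=
          match n with O => (hzero, 1) | S k => f k (fst (g k)) (snd (g k)) end).
  assert (Hpos : forall n, 0 < snd (g n)).
  { induction n; simpl; [lra|]. apply (Hf n _ _ IHn). }
  assert (Hg : forall n, shrink_step n (fst (g n)) (snd (g n)) (g (S n)))
    by (intros n; apply Hf, Hpos).
  destruct (nested_balls_point (fun n => fst (g n)) (fun n => snd (g n)) Hpos)
    as [l Hl]; [intros n; apply Hg | intros n; apply Hg |].
  destruct (Hpt l) as [M HM]. destruct (INR_unbounded M) as [k Hk].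
  destruct (Hg k) as (_ & _ & _ & Hlarge). destruct (Hlarge l (Hl (S k))) as [i Hi].
  specialize (HM i). lra.
Qed.

End UniformBoundedness.

Lemma lin_add {H : Hilbert} (T : Op H) x y : linear_op T -> dom T x -> dom T y ->
  dom T (hadd x y) /\ ap T (hadd x y) = hadd (ap T x) (ap T y).
Proof. intros [_ [Ta _]]; auto. Qed.

Lemma lin_scal {H : Hilbert} (T : Op H) a x : linear_op T -> dom T x ->
  dom T (hscal a x) /\ ap T (hscal a x) = hscal a (ap T x).
Proof. intros [_ [_ Ts]]; auto. Qed.

Lemma lin_sub {H : Hilbert} (T : Op H) x y : linear_op T -> dom T x -> dom T y ->
  dom T (hsub x y) /\ ap T (hsub x y) = hsub (ap T x) (ap T y).
Proof.
  intros HT Hx Hy. unfold hsub. rewrite !hopp_scal.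
  destruct (lin_scal T (RtoC (-1)) y HT Hy) as [D E].
  destruct (lin_add T x _ HT Hx D) as [D2 E2]. now rewrite E2, E.
Qed.

Lemma linear_opmul {H : Hilbert} (S T : Op H) :
  linear_op S -> linear_op T -> linear_op (opmul S T).
Proof.
  intros HS HT. pose proof HT as [T0 _]. split; [|split]; simpl.
  - split; auto. destruct (lin_scal T C0 hzero HT T0) as [_ E].
    rewrite hscal_zero_s, hscal_zero_s in E. rewrite E. apply HS.
  - intros x y [Tx Sx] [Ty Sy]. destruct (lin_add T x y HT Tx Ty) as [Txy ->].
    destruct (lin_add S _ _ HS Sx Sy) as [Sxy E]; auto.
  - intros a x [Tx Sx]. destruct (lin_scal T a x HT Tx) as [Tax ->].
    destruct (lin_scal S a _ HS Sx); auto.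
Qed.

Lemma linear_oppow {H : Hilbert} (T : Op H) k : linear_op T -> linear_op (oppow T k).
Proof.
  intros HT. induction k; simpl; [|now apply linear_opmul].
  unfold linear_op; simpl; repeat split; auto.
Qed.

Lemma dom_pow_mono {H : Hilbert} (T : Op H) k j x :
  dom (oppow T k) x -> (j <= k)%nat -> dom (oppow T j) x.
Proof.
  revert j x. induction k; intros j x Hx Hj.
  - now replace j with O by lia.
  - destruct j; simpl; [exact I|]. destruct Hx. split; auto. apply IHk; auto. lia.
Qed.

Lemma resolvent {H : Hilbert} (T : Op H) (l : C) : linear_op T -> in_rho T l ->
  exists Rf : H -> H,
    (forall z, dom T (Rf z) /\ hsub (ap T (Rf z)) (hscal l (Rf z)) = z) /\
    (forall x, dom T x -> Rf (hsub (ap T x) (hscal l x)) = x) /\ BL Rf.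
Proof.
  intros HT [Inj [Sur [c Bd]]].
  pose (Rf := fun z => epsilon (inhabits (@hzero H))
                (fun x => dom T x /\ hsub (ap T x) (hscal l x) = z)).
  assert (R1 : forall z, dom T (Rf z) /\ hsub (ap T (Rf z)) (hscal l (Rf z)) = z)
    by (intros z; apply epsilon_spec, Sur).
  assert (R2 : forall x, dom T x -> Rf (hsub (ap T x) (hscal l x)) = x).
  { intros x Dx. destruct (R1 (hsub (ap T x) (hscal l x))) as [D E]. apply Inj; auto. }
  exists Rf. split; [exact R1|]. split; [exact R2|]. split; [|split].
  - intros x y. destruct (R1 x) as [Dx Ex]. destruct (R1 y) as [Dy Ey].
    destruct (lin_add T _ _ HT Dx Dy) as [D E].
    rewrite <- (R2 (hadd (Rf x) (Rf y))) by auto. f_equal.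
    now rewrite E, hscal_addv, hsub_hadd, Ex, Ey.
  - intros a x. destruct (R1 x) as [Dx Ex]. destruct (lin_scal T a _ HT Dx) as [D E].
    rewrite <- (R2 (hscal a (Rf x))) by auto. f_equal.
    now rewrite E, hscal_comm, hsub_scal, Ex.
  - exists (Rabs c). split; [apply Rabs_pos|]. intros z. destruct (R1 z) as [D E].
    rewrite <- E at 2. eapply Rle_trans; [apply Bd; auto|].
    apply Rmult_le_compat_r; [apply hnorm_pos | apply Rle_abs].
Qed.

(** ** The Hellinger–Toeplitz argument *)

Lemma le_of_le_plus_eps (a b k : R) : 0 <= k -> (forall e, 0 < e -> a <= b + k * e) -> a <= b.
Proof.
  intros Hk Hab. apply Rnot_lt_le. intros Hlt.
  assert (He : 0 < (a - b) / (k + 1)) by (apply Rdiv_lt_0_compat; lra).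
  specialize (Hab _ He).
  assert (k * ((a - b) / (k + 1)) < a - b).
  { apply (Rmult_lt_reg_l (k + 1)); [lra|].
    replace ((k + 1) * (k * ((a - b) / (k + 1)))) with (k * (a - b)) by (field; lra). nra. }
  lra.
Qed.

Lemma norm_le_of_dense_test {H : Hilbert} (D : H -> Prop) (u : H) (M : R) :
  dense D -> (forall t v, D v -> D (hscal (RtoC t) v)) -> 0 <= M ->
  (forall v, D v -> hnorm v <= 1 -> Rabs (rinner u v) <= M) -> hnorm u <= M.
Proof.
  intros Hdense Hscal HM Htest.
  assert (Hv : forall v, D v -> Rabs (rinner u v) <= M * hnorm v).
  { intros v Dv. destruct (Req_dec (hnorm v) 0) as [E|E].
    - apply hnorm_eq0 in E. subst v. rewrite rinner_zero_r, hnorm_zero, Rabs_R0. lra.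
    - pose proof (hnorm_pos v). set (t := / hnorm v).
      assert (Ht : 0 < t) by (apply Rinv_0_lt_compat; lra).
      assert (Nv : hnorm (hscal (RtoC t) v) <= 1).
      { rewrite hnorm_scal, Cabs_RtoC, Rabs_pos_eq by lra. unfold t. rewrite Rinv_l; lra. }
      pose proof (Htest _ (Hscal t v Dv) Nv) as T.
      rewrite rinner_scalr, Rabs_mult, (Rabs_pos_eq t) in T by lra.
      apply Rmult_le_compat_l with (r := hnorm v) in T; [|lra].
      replace (hnorm v * (t * Rabs (rinner u v))) with (Rabs (rinner u v)) in T
        by (unfold t; field; lra). lra. }
  pose proof (hnorm_pos u).
  assert (Hsq : hnorm u * hnorm u <= M * hnorm u).
  { apply (le_of_le_plus_eps _ _ (M + hnorm u)); [lra|]. intros e He.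
    destruct (Hdense u e He) as [v [Dv Hve]].
    rewrite hnorm_sq.
    replace (rinner u u) with (rinner u v + rinner u (hsub u v)) by (rewrite rinner_subr; ring).
    pose proof (Hv v Dv). pose proof (cauchy_schwarz u (hsub u v)).
    pose proof (Rle_abs (rinner u v)). pose proof (Rle_abs (rinner u (hsub u v))).
    pose proof (hsub_triangle v u hzero) as T. rewrite !hsub_zero, hnorm_sub_sym in T.
    pose proof (hnorm_pos (hsub u v)).
    assert (M * hnorm v <= M * (hnorm u + e)) by (apply Rmult_le_compat_l; lra).
    assert (hnorm u * hnorm (hsub u v) <= hnorm u * e) by (apply Rmult_le_compat_l; lra).
    nra. }
  destruct (Req_dec (hnorm u) 0) as [E|E]; [lra|].
  apply (Rmult_le_reg_r (hnorm u)); lra.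
Qed.

Lemma symmetric_after_bounded {H : Hilbert} (B : Op H) (S : H -> H) :
  selfadjoint B -> (forall w, dom B (S w)) -> BL S -> BL (fun w => ap B (S w)).
Proof.
  intros [LB [Bdense [Bsym _]]] HSd HS. pose proof HS as (Sa & Ss & c & Hc0 & Hc).
  pose (I := {v : H | dom B v /\ hnorm v <= 1}).
  pose (psi := fun (v : I) w => rinner (ap B (S w)) (proj1_sig v)).
  assert (Hadd : forall w w', ap B (S (hadd w w')) = hadd (ap B (S w)) (ap B (S w')))
    by (intros; rewrite Sa; apply lin_add; auto).
  assert (Hsc : forall a w, ap B (S (hscal a w)) = hscal a (ap B (S w)))
    by (intros; rewrite Ss; apply lin_scal; auto).
  assert (Hsym : forall i w, psi i w = rinner (S w) (ap B (proj1_sig i))).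
  { intros [v [Hv Hv1]] w. unfold psi, rinner; simpl. now rewrite Bsym. }
  destruct (uniform_boundedness psi) as [K HK].
  - intros i x y. unfold psi. rewrite Hadd. apply rinner_addl.
  - intros i t x. unfold psi. rewrite Hsc. apply rinner_scall.
  - intros i. exists (c * hnorm (ap B (proj1_sig i))).
    pose proof (hnorm_pos (ap B (proj1_sig i))). split; [nra|]. intros x. rewrite Hsym.
    eapply Rle_trans; [apply cauchy_schwarz|]. specialize (Hc x). nra.
  - intros x. exists (hnorm (ap B (S x))). intros [v [Hv Hv1]]. unfold psi; simpl.
    eapply Rle_trans; [apply cauchy_schwarz|].
    pose proof (hnorm_pos (ap B (S x))). pose proof (hnorm_pos v). nra.
  - split; [exact Hadd|]. split; [exact Hsc|]. exists (Rabs K). split; [apply Rabs_pos|].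
    intros w. pose proof (hnorm_pos w). pose proof (Rle_abs K). pose proof (Rabs_pos K).
    apply (norm_le_of_dense_test (dom B)); [exact Bdense | intros; now apply lin_scal | nra |].
    intros v Dv Nv. eapply Rle_trans; [apply (HK (exist _ v (conj Dv Nv)) w)|].
    apply Rmult_le_compat_r; auto.
Qed.

(** ** Resolvent cores *)

Lemma BL_iter {H : Hilbert} (f : H -> H) (j : nat) : BL f -> BL (Nat.iter j f).
Proof.
  intros Hf. induction j; simpl; [apply BL_id|]. now apply (BL_comp f (Nat.iter j f)).
Qed.

Section ResolventCore.
Context {H : Hilbert} (T B : Op H) (l : C) (Rf : H -> H).
Hypothesis T_linear : linear_op T.
Hypothesis B_selfadjoint : selfadjoint B.
Hypothesis dom_T_B : forall x, dom T x -> dom B x.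
Hypothesis Rf_right : forall z, dom T (Rf z) /\ hsub (ap T (Rf z)) (hscal l (Rf z)) = z.
Hypothesis Rf_left : forall x, dom T x -> Rf (hsub (ap T x) (hscal l x)) = x.
Hypothesis Rf_BL : BL Rf.

Lemma T_Rf (v : H) : ap T (Rf v) = hadd v (hscal l (Rf v)).
Proof. apply hsub_eq, Rf_right. Qed.

Lemma pow_T_Rf (k : nat) (v : H) :
  dom (oppow T k) v -> dom (oppow T k) (Rf v) ->
  dom (oppow T (S k)) (Rf v) /\
  ap (oppow T (S k)) (Rf v) = hadd (ap (oppow T k) v) (hscal l (ap (oppow T k) (Rf v))).
Proof.
  intros Dv DRv. pose proof (linear_oppow T k T_linear) as Lk.
  destruct (lin_scal _ l _ Lk DRv) as [Ds Es].
  destruct (lin_add _ _ _ Lk Dv Ds) as [Da Ea].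
  simpl. rewrite T_Rf, Ea, Es. split; [split; [apply Rf_right | exact Da] | reflexivity].
Qed.

Lemma pow_T_pow_Rf (k j : nat) : (k <= j)%nat ->
  (forall w, dom (oppow T k) (Nat.iter j Rf w)) /\
  BL (fun w => ap (oppow T k) (Nat.iter j Rf w)) /\
  (forall w, dom B w -> dom B (ap (oppow T k) (Nat.iter j Rf w))).
Proof.
  pose proof B_selfadjoint as [LB _].
  revert j. induction k as [|k IH]; intros j Hkj.
  - split; [simpl; auto|]. split; [apply BL_iter, Rf_BL|].
    intros w Bw. destruct j; simpl; auto. apply dom_T_B, Rf_right.
  - destruct j as [|j]; [lia|].
    destruct (IH j ltac:(lia)) as [D1 [B1 G1]].
    destruct (IH (S j) ltac:(lia)) as [D2 [B2 G2]]. simpl Nat.iter in D2, B2, G2 |- *.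
    assert (E := fun w => pow_T_Rf k _ (D1 w) (D2 w)).
    split; [intros w; apply E|]. split.
    + apply (BL_ext (fun w => hadd (ap (oppow T k) (Nat.iter j Rf w))
                                   (hscal l (ap (oppow T k) (Rf (Nat.iter j Rf w)))))).
      * intros w. symmetry. apply E.
      * apply BL_add; [exact B1 | now apply BL_scal].
    + intros w Bw. rewrite (proj2 (E w)).
      apply (lin_add B _ _ LB (G1 w Bw)), (lin_scal B _ _ LB (G2 w Bw)).
Qed.

Lemma dom_pow_range (j : nat) (v : H) : dom (oppow T j) v -> exists w, v = Nat.iter j Rf w.
Proof.
  revert v. induction j as [|j IH]; intros v Dv; [now exists v|].
  destruct Dv as [DTv DTj].
  assert (Dvj : dom (oppow T j) v) by (apply (dom_pow_mono T (S j)); [split; auto | lia]).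
  destruct (IH (hsub (ap T v) (hscal l v))) as [w Ew].
  { apply (lin_sub _ _ _ (linear_oppow T j T_linear) DTj),
      (lin_scal _ _ _ (linear_oppow T j T_linear) Dvj). }
  exists w. simpl. rewrite <- Ew. symmetry. now apply Rf_left.
Qed.

(** Write [x = R^n w], approximate [w] in [dom B] and push forward by [R^n];
    the [B]-convergence uses that [B R] is bounded (Hellinger–Toeplitz). *)
Lemma resolvent_core_of (n : nat) (x : H) : (1 <= n)%nat -> dom (oppow T n) x ->
  exists xs : nat -> H,
    (forall m, dom (oppow T n) (xs m) /\ dom B (ap (oppow T n) (xs m))) /\
    (forall k, (k <= n)%nat -> hconv (fun m => ap (oppow T k) (xs m)) (ap (oppow T k) x)) /\
    hconv (fun m => ap B (xs m)) (ap B x).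
Proof.
  intros Hn Dx. destruct (dom_pow_range n x Dx) as [w ->].
  destruct (dense_seq (dom B) (proj1 (proj2 B_selfadjoint)) w) as [ws [Dws Cws]].
  exists (fun m => Nat.iter n Rf (ws m)). split; [|split].
  - intros m. destruct (pow_T_pow_Rf n n (le_n _)) as [D [_ G]]. auto.
  - intros k Hk. apply (hconv_BL (fun w => ap (oppow T k) (Nat.iter n Rf w))); auto.
    now apply pow_T_pow_Rf.
  - destruct n as [|n]; [lia|]. simpl.
    apply (hconv_BL (fun w => ap B (Rf (Nat.iter n Rf w)))); auto.
    apply (symmetric_after_bounded B (fun w => Rf (Nat.iter n Rf w))); auto.
    + intros v. apply dom_T_B, Rf_right.
    + apply BL_comp; [exact Rf_BL | now apply BL_iter].
Qed.

End ResolventCore.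

Lemma resolvent_core {H : Hilbert} (T B : Op H) (n : nat) (x : H) :
  linear_op T -> rho_nonempty T -> selfadjoint B -> (forall y, dom T y -> dom B y) ->
  (1 <= n)%nat -> dom (oppow T n) x ->
  exists xs : nat -> H,
    (forall m, dom (oppow T n) (xs m) /\ dom B (ap (oppow T n) (xs m))) /\
    (forall k, (k <= n)%nat -> hconv (fun m => ap (oppow T k) (xs m)) (ap (oppow T k) x)) /\
    hconv (fun m => ap B (xs m)) (ap B x).
Proof.
  intros LT [l Hl] SB DTB. destruct (resolvent T l LT Hl) as [Rf [R1 [R2 R3]]].
  now apply (resolvent_core_of T B l Rf).
Qed.

Lemma hsum_ext {H : Hilbert} (f g : nat -> H) d :
  (forall k, (k <= d)%nat -> f k = g k) -> hsum_upto f d = hsum_upto g d.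
Proof.
  induction d; intros E; simpl; [apply E; lia|].
  rewrite IHd by (intros; apply E; lia). now rewrite E by lia.
Qed.

Lemma hsum_shift {H : Hilbert} (f : nat -> H) d :
  hsum_upto f (S d) = hadd (f O) (hsum_upto (fun k => f (S k)) d).
Proof. induction d; simpl in *; [reflexivity|]. now rewrite IHd, hadd_assoc. Qed.

Lemma lin_hsum {H : Hilbert} (G : Op H) (f : nat -> H) d : linear_op G ->
  (forall k, (k <= d)%nat -> dom G (f k)) ->
  dom G (hsum_upto f d) /\ ap G (hsum_upto f d) = hsum_upto (fun k => ap G (f k)) d.
Proof.
  intros HG. induction d; intros Hf; simpl; [split; [apply Hf; lia | reflexivity]|].
  destruct IHd as [D E]; [intros; apply Hf; lia|].
  destruct (lin_add G _ _ HG D (Hf (S d) (le_n _))) as [D2 E2]. now rewrite E2, E.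
Qed.

Lemma hconv_hsum {H : Hilbert} (u : nat -> nat -> H) (l : nat -> H) d :
  (forall k, (k <= d)%nat -> hconv (fun n => u n k) (l k)) ->
  hconv (fun n => hsum_upto (u n) d) (hsum_upto l d).
Proof.
  induction d; intros Hu; simpl; [apply Hu; lia|].
  apply hconv_add; [apply IHd; intros; apply Hu | apply Hu]; lia.
Qed.

Lemma polyop_conv {H : Hilbert} (T : Op H) (p : nat -> R) d (xs : nat -> H) x :
  (forall k, (k <= d)%nat -> hconv (fun m => ap (oppow T k) (xs m)) (ap (oppow T k) x)) ->
  hconv (fun m => ap (polyop T p d) (xs m)) (ap (polyop T p d) x).
Proof.
  intros Hk. apply (hconv_hsum (fun m k => hscal (RtoC (p k)) (ap (oppow T k) (xs m)))).
  intros k Hkd. now apply hconv_scal, Hk.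
Qed.

Lemma polyop_shiftX {H : Hilbert} (T : Op H) (p : nat -> R) d x :
  ap (polyop T (shiftX p) (S d)) x = ap (polyop T p d) (ap T x).
Proof.
  unfold polyop; cbn [ap]. rewrite hsum_shift. simpl shiftX.
  replace (RtoC 0) with C0 by reflexivity. now rewrite hscal_zero_s, hzero_add.
Qed.

(** ** Intertwining [G (AG)^k = (GA)^k G] *)

Lemma pow_intertwine {H : Hilbert} (A G : Op H) k : forall x, dom G x ->
  (dom (oppow (opmul G A) k) (ap G x) <->
     dom (oppow (opmul A G) k) x /\ dom G (ap (oppow (opmul A G) k) x)) /\
  (dom (oppow (opmul G A) k) (ap G x) ->
     ap (oppow (opmul G A) k) (ap G x) = ap G (ap (oppow (opmul A G) k) x)).
Proof.
  induction k as [|k IH]; intros x Gx; simpl; [tauto|].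
  set (x' := ap A (ap G x)). split; [split|].
  - intros [[D1 D2] D3]. destruct (proj1 (proj1 (IH x' D2)) D3). auto.
  - intros [[[_ D1] D2] D3].
    assert (Gx' : dom G x') by (destruct k; simpl in *; tauto).
    split; [auto|]. now apply (proj1 (IH x' Gx')).
  - intros [[D1 D2] D3]. now apply (proj2 (IH x' D2)).
Qed.

(** [(p(GA) Gx, x) = (p(AG) x, Gx)], by intertwining and symmetry of [G]. *)
Lemma polyop_intertwine {H : Hilbert} (A G : Op H) (p : nat -> R) d x :
  selfadjoint G -> dom G x -> dom (oppow (opmul G A) d) (ap G x) ->
  hinner (ap (polyop (opmul G A) p d) (ap G x)) x =
  hinner (ap (polyop (opmul A G) p d) x) (ap G x).
Proof.
  intros [LG [_ [Gsym _]]] Gx D.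
  set (f := fun k => hscal (RtoC (p k)) (ap (oppow (opmul A G) k) x)).
  assert (Hk : forall k, (k <= d)%nat -> dom G (f k) /\
     hscal (RtoC (p k)) (ap (oppow (opmul G A) k) (ap G x)) = ap G (f k)).
  { intros k Hk. pose proof (dom_pow_mono _ _ _ _ D Hk) as Dk.
    destruct (pow_intertwine A G k x Gx) as [[I1 _] I2]. destruct (I1 Dk) as [_ DG].
    destruct (lin_scal G (RtoC (p k)) _ LG DG) as [D3 E3]. unfold f. now rewrite E3, I2. }
  destruct (lin_hsum G f d LG) as [DS ES]; [intros k Hk'; apply Hk; auto|].
  simpl. rewrite (hsum_ext _ (fun k => ap G (f k))) by (intros k Hk'; apply Hk; auto).
  rewrite <- ES. apply Gsym; auto.
Qed.

(** Part (a) for a constant polynomial: nonnegativity of [(c y, Gy)] on [dom AG]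
    extends to the vectors [Ax], [x ∈ dom GA], through a resolvent core of [GA]. *)
Lemma definitizing_constant_swap {H : Hilbert} (A G : Op H) (c : R) :
  selfadjoint A -> selfadjoint G -> rho_nonempty (opmul G A) ->
  (forall y, dom (opmul A G) y -> Cnonneg (hinner (hscal (RtoC c) y) (ap G y))) ->
  forall x, dom (opmul G A) x -> Cnonneg (hinner (hscal (RtoC c) (ap A x)) (ap G (ap A x))).
Proof.
  intros SA SG Hrho Hyp x Dx.
  assert (LGA : linear_op (opmul G A)) by (apply linear_opmul; [apply SG | apply SA]).
  destruct (resolvent_core (opmul G A) A 1 x LGA Hrho SA) as [xs [Dxs [CT CA]]].
  - intros y [Ay _]. exact Ay.
  - lia.
  - simpl. tauto.
  - apply (Cnonneg_lim (fun m => hscal (RtoC c) (ap A (xs m))) (fun m => ap G (ap A (xs m)))).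
    + now apply hconv_scal.
    + apply (CT 1%nat (le_n _)).
    + intros m. apply Hyp. destruct (Dxs m) as [[[D1 D2] _] D3]. simpl. auto.
Qed.

(** Part (a): [((λp)(GA) x, Ax) = (p(GA) GAx, Ax) = (p(AG) Ax, GAx)]. *)
Lemma part_a {H : Hilbert} (A G : Op H) (p : nat -> R) (d : nat) :
  selfadjoint A -> selfadjoint G ->
  definitizable_with A G p d -> definitizable_with G A (shiftX p) (S d).
Proof.
  intros SA SG [RAG [RGA Hdef]]. split; [exact RGA|]. split; [exact RAG|].
  intros x Dx. replace (Nat.max 1 (S d)) with (S d) in Dx by lia.
  destruct Dx as [[DAx DGAx] Dd].
  rewrite polyop_shiftX. change (ap (opmul G A) x) with (ap G (ap A x)).
  rewrite polyop_intertwine by auto.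
  destruct d as [|d].
  - apply (definitizing_constant_swap A G (p 0%nat) SA SG RGA); [|split; auto].
    intros y Dy. apply (Hdef y). simpl. auto.
  - apply Hdef. replace (Nat.max 1 (S d)) with (S d) by lia.
    now apply (pow_intertwine A G (S d) (ap A x) DGAx).
Qed.

Lemma inv_op_spec {H : Hilbert} (G : Op H) : boundedly_invertible G ->
  forall y, dom G (ap (inv_op G) y) /\ ap G (ap (inv_op G) y) = y.
Proof.
  intros [_ [Sur _]] y. unfold inv_op; cbn [ap]. apply epsilon_spec.
  destruct (Sur y) as [x [Dx Ex]]. exists x. split; auto.
  now rewrite hscal_zero_s, hsub_zero in Ex.
Qed.

Lemma inv_op_left {H : Hilbert} (G : Op H) : boundedly_invertible G ->
  forall x, dom G x -> ap (inv_op G) (ap G x) = x.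
Proof.
  intros HG x Dx. destruct (inv_op_spec G HG (ap G x)) as [Di Ei].
  apply (proj1 HG); auto. now rewrite !hscal_zero_s, !hsub_zero.
Qed.

(** Part (b), forward: substitute [x = G^-1 y] and intertwine. *)
Lemma part_b_forward {H : Hilbert} (A G : Op H) (p : nat -> R) (d : nat) :
  selfadjoint G -> boundedly_invertible G -> definitizable_with A G p d ->
  forall y, dom (oppow (opmul G A) (Nat.max 1 d)) y ->
    Cnonneg (hinner (ap (polyop (opmul G A) p d) y) (ap (inv_op G) y)).
Proof.
  intros SG HG [_ [_ Hdef]] y Dy.
  destruct (inv_op_spec G HG y) as [Dx Ex]. set (x := ap (inv_op G) y) in *.
  rewrite <- Ex in Dy |- *.
  rewrite polyop_intertwine; [| exact SG | exact Dx | eapply dom_pow_mono; [exact Dy | lia]].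
  apply Hdef. now apply (pow_intertwine A G _ x Dx).
Qed.

(** Part (b), backward: the condition on [dom (GA)^n] gives nonnegativity on the
    [x ∈ dom (AG)^n] with [(AG)^n x ∈ dom G]; a resolvent core of [AG] and
    closedness of the nonnegative cone extend it to all of [dom (AG)^n]. *)
Lemma part_b_backward {H : Hilbert} (A G : Op H) (p : nat -> R) (d : nat) :
  selfadjoint A -> selfadjoint G -> boundedly_invertible G ->
  rho_nonempty (opmul A G) ->
  (forall y, dom (oppow (opmul G A) (Nat.max 1 d)) y ->
     Cnonneg (hinner (ap (polyop (opmul G A) p d) y) (ap (inv_op G) y))) ->
  forall x, dom (oppow (opmul A G) (Nat.max 1 d)) x ->
    Cnonneg (hinner (ap (polyop (opmul A G) p d) x) (ap G x)).
Proof.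
  intros SA SG HG RAG Hc x Dx. set (n := Nat.max 1 d) in *.
  assert (LAG : linear_op (opmul A G)) by (apply linear_opmul; [apply SA | apply SG]).
  destruct (resolvent_core (opmul A G) G n x LAG RAG SG) as [xs [Dxs [CT CG]]];
    [intros y [Gy _]; exact Gy | unfold n; lia | exact Dx |].
  apply (Cnonneg_lim (fun m => ap (polyop (opmul A G) p d) (xs m)) (fun m => ap G (xs m)));
    [apply polyop_conv; intros k Hk; apply CT; unfold n in *; lia | exact CG |].
  intros m. destruct (Dxs m) as [Dn DGn].
  assert (Gxm : dom G (xs m))
    by (destruct (dom_pow_mono _ _ 1 _ Dn ltac:(unfold n; lia)) as [[Dg _] _]; exact Dg).
  assert (DGA : dom (oppow (opmul G A) n) (ap G (xs m))) by now apply pow_intertwine.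
  specialize (Hc _ DGA). rewrite inv_op_left, polyop_intertwine in Hc; auto.
  apply (dom_pow_mono _ _ _ _ DGA). unfold n; lia.
Qed.

Theorem mainTheorem14 (H : Hilbert) (A G : Op H) (p : nat -> R) (d : nat) :
  selfadjoint A -> selfadjoint G -> is_degree p d ->
  (definitizable_with A G p d -> definitizable_with G A (shiftX p) (S d)) /\
  (boundedly_invertible G ->
     (definitizable_with A G p d <->
        rho_nonempty (opmul A G) /\ rho_nonempty (opmul G A) /\
        forall x, dom (oppow (opmul G A) (Nat.max 1 d)) x ->
          Cnonneg (hinner (ap (polyop (opmul G A) p d) x) (ap (inv_op G) x)))).
Proof.
  intros SA SG _. split; [now apply part_a|].
  intros HG. split.
  - intros Hdef. pose proof Hdef as [RAG [RGA _]].
    split; [exact RAG|]. split; [exact RGA|]. now apply part_b_forward.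
  - intros [RAG [RGA Hc]]. split; [exact RAG|]. split; [exact RGA|].
    now apply part_b_backward.
Qed.
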